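(* Let $G$ be a cycle graph with $L\ge2$ edges and root $O$, and let all edges have activation probability $p\in(0,1]$. Then Eulerian strategies of the searcher are best responses to the uniform distribution of the hider on the edges.
   Context: Setting: the stochastic search game. Every edge has length $1$ and is active at each stage independently with probability $p$. The hider chooses an edge and stays there. The searcher starts at $O$; at each stage, knowing which edges are currently active, she waits or traverses an active edge incident to her position. The hider's payoff is the expected first time the searcher traverses his edge. An Eulerian strategy is a searcher strategy that at each stage either waits or traverses an active, not yet traversed edge incident to her position, in such a way that the sequence of traversed edges forms an Eulerian cycle starting from $O$. On a cycle graph this means going around the cycle in one direction, the direction being chosen at the first move. *)

From HB Require Import structures.
From mathcomp Require Import all_boot all_order all_algebra.
Set Implicit Arguments. Unset Strict Implicit. Unset Printing Implicit Defensive.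
Import Order.TTheory GRing.Theory Num.Theory.

(* Cycle graph with L edges: vertices 0..L-1 (naturals), root O = vertex 0;
   edge e : 'I_L joins vertex e and vertex (e+1) mod L. *)

Definition act (L : nat) := {ffun 'I_L -> bool}.

Definition active (L : nat) (a : act L) (k : nat) : bool :=
  [exists e : 'I_L, (val e == k) && a e].

(* A (pure, history dependent) searcher strategy: given the history of the
   activation states observed so far, INCLUDING the current one, it chooses
   to wait (None) or to traverse the edge e (Some e).  A choice of an edge
   that is not active or not incident to the current position is treated
   as waiting. *)
Definition strategy (L : nat) := seq (act L) -> option 'I_L.

Definition mv (L : nat) (v : nat) (a : act L) (m : option 'I_L)
  : option ('I_L * nat) :=
  match m with
  | Some e =>
      if a e && (v == val e) then Some (e, (val e).+1 %% L)
      else if a e && (v == (val e).+1 %% L) then Some (e, val e)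
      else None
  | None => None
  end.

Fixpoint simst (L : nat) (s : strategy L) (hist : seq (act L)) (v : nat)
  (tr : seq 'I_L) (fut : seq (act L)) : nat * seq 'I_L :=
  match fut with
  | [::] => (v, tr)
  | a :: fut' =>
      let h := rcons hist a in
      match mv v a (s h) with
      | Some (e, v') => simst s h v' (rcons tr e) fut'
      | None => simst s h v tr fut'
      end
  end.

Definition state (L : nat) (s : strategy L) (w : seq (act L)) : nat * seq 'I_L :=
  simst s [::] 0 [::] w.

(* Eulerian rule on a cycle, for one stage: at position v, having traversed
   tr, facing activation a, the realized move is r.
   - Before the first move: traverse an incident active edge (0 or L-1) if
     one is active (choice free), otherwise wait.
   - After the first move and until all L edges are traversed: keep the
     direction chosen at the first move; traverse the next edge in that
     direction iff it is active, otherwise wait.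
   - After the tour is complete: anything. *)
Definition eul_ok (L : nat) (v : nat) (tr : seq 'I_L) (a : act L)
  (r : option ('I_L * nat)) : bool :=
  match tr with
  | [::] =>
      match r with
      | None => ~~ active a 0 && ~~ active a L.-1
      | Some _ => true
      end
  | e1 :: _ =>
      if size tr < L then
        let nxt := if val e1 == 0 then v else (v + L.-1) %% L in
        match r with
        | None => ~~ active a nxt
        | Some (e, _) => val e == nxt
        end
      else true
  end.

Definition Eulerian (L : nat) (s : strategy L) : Prop :=
  forall (w : seq (act L)) (a : act L),
    eul_ok (state s w).1 (state s w).2 a
      (mv (state s w).1 a (s (rcons w a))).

Local Open Scope ring_scope.

Definition weight (R : realFieldType) (L t : nat) (p : R)
  (w : {ffun 'I_t -> act L}) : R :=
  \prod_(i < t) \prod_(e < L) (if w i e then p else 1 - p).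

Definition hist_of (L t : nat) (w : {ffun 'I_t -> act L}) : seq (act L) :=
  map w (enum 'I_t).

(* P(T_e > t): probability that edge e has not been traversed during the
   first t stages (T_e = stage at which e is first traversed). *)
Definition prob_not_found (R : realFieldType) (L : nat) (p : R)
  (s : strategy L) (e : 'I_L) (t : nat) : R :=
  \sum_(w : {ffun 'I_t -> act L})
     (if e \in (state s (hist_of w)).2 then 0 else weight p w).

(* The payoff is the series sum_{t>=0} of these
   terms, i.e. (1/L) sum_e E[T_e]  (E[T] = sum_{t>=0} P(T > t)). *)
Definition unif_term (R : realFieldType) (L : nat) (p : R)
  (s : strategy L) (t : nat) : R :=
  L%:R^-1 * \sum_(e < L) prob_not_found p s e t.

(* Comparison of sums of series with nonnegative terms, in [0, +oo]:
   sum u <= sum v. *)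
Definition series_le (R : realFieldType) (u v : nat -> R) : Prop :=
  forall N : nat, exists M : nat, \sum_(t < N) u t <= \sum_(t < M) v t.

Definition payoff_le (R : realFieldType) (L : nat) (p : R)
  (s s' : strategy L) : Prop :=
  series_le (unif_term p s) (unif_term p s').

From HB Require Import structures.
From mathcomp Require Import all_boot all_order all_algebra.
From mathcomp Require Import zify ring lra.
Set Implicit Arguments. Unset Strict Implicit. Unset Printing Implicit Defensive.
Import Order.TTheory GRing.Theory Num.Theory.
Local Open Scope ring_scope.

(* Against the uniform hider, the t-th term of the payoff series is E[U_t]/L,
   where U_t is the number of edges not yet traversed after t stages; so it
   suffices to show that an Eulerian strategy minimises E[U_t] for every t.
   Let d(u) be 2 if u = L (no move yet: both edges at O are candidates) and
   1 otherwise, and define the value function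
     value(0, u) = u,
     value(t+1, u) = value(t, u) - (1 - (1-p)^d(u)) (value(t, u) - value(t, u-1)),
   which is nondecreasing in u.  We prove
   (A) for every strategy, E[U_t] >= value(t, L): the traversed edges always
       form an arc through O containing the searcher, so at most d(U) of the
       untraversed edges are incident to her and U drops by one with
       probability at most 1 - (1-p)^d(U);
   (B) for an Eulerian strategy, E[U_t] = value(t, L): it always faces exactly
       d(U) untraversed incident edges and takes one as soon as it is active. *)

Section Expectation.
Variables (R : realFieldType) (L : nat) (p : R).

Definition act_weight (a : act L) : R := \prod_(e < L) (if a e then p else 1 - p).

Fixpoint expect (t : nat) (G : seq (act L) -> R) : R :=
  if t is t'.+1 then \sum_(a : act L) act_weight a * expect t' (fun l => G (a :: l))
  else G [::].

Lemma eq_expect t (G G' : seq (act L) -> R) :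
  G =1 G' -> expect t G = expect t G'.
Proof.
elim: t G G' => [|t IH] G G' eqG /=; first exact: eqG.
by apply: eq_bigr => a _; congr (_ * _); apply: IH.
Qed.

Lemma sum_weight_hist t (G : seq (act L) -> R) :
  \sum_(w : {ffun 'I_t -> act L}) weight p w * G (hist_of w) = expect t G.
Proof.
elim: t G => [|t IH] G /=.
  rewrite (eq_bigr (fun=> G [::])) => [|w _]; last first.
    by rewrite /weight /hist_of big_ord0 mul1r enum_ord0.
  by rewrite sumr_const card_ffun card_ord expn0 mulr1n.
pose cons_ffun (x : act L * {ffun 'I_t -> act L}) : {ffun 'I_t.+1 -> act L} :=
  [ffun i => if unlift ord0 i is Some j then x.2 j else x.1].
pose uncons_ffun (f : {ffun 'I_t.+1 -> act L}) := (f ord0, [ffun j => f (lift ord0 j)]).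
have cons0 x : cons_ffun x ord0 = x.1 by rewrite ffunE unlift_none.
have consS x i : cons_ffun x (lift ord0 i) = x.2 i by rewrite ffunE liftK.
have consK : cancel cons_ffun uncons_ffun.
  by case=> a g; rewrite /uncons_ffun cons0; congr pair; apply/ffunP => i; rewrite ffunE consS.
have unconsK : cancel uncons_ffun cons_ffun.
  move=> f; apply/ffunP => i; rewrite ffunE.
  by case: (unliftP ord0 i) => [j ->|->] /=; rewrite ?ffunE.
rewrite (reindex cons_ffun); last by apply: onW_bij; exists uncons_ffun.
rewrite -(pair_big xpredT xpredT
  (fun a g => weight p (cons_ffun (a, g)) * G (hist_of (cons_ffun (a, g))))) /=.
apply: eq_bigr => a _; rewrite -(IH (fun l => G (a :: l))) mulr_sumr.
apply: eq_bigr => g _.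
rewrite /weight big_ord_recl /hist_of enum_ordSl /= cons0 /= mulrA.
congr (_ * _ * G _); first by apply: eq_bigr => i _; rewrite consS.
by rewrite -map_comp; congr (_ :: _); apply: eq_map => i /=; rewrite consS.
Qed.

Lemma sum_act_prod (G : 'I_L -> bool -> R) :
  \sum_(a : act L) \prod_(e < L) G e (a e) = \prod_(e < L) (G e true + G e false).
Proof. by rewrite -(bigA_distr_bigA G) /=; apply: eq_bigr => e _; rewrite big_bool. Qed.

Lemma sum_act_weight : \sum_(a : act L) act_weight a = 1.
Proof.
rewrite (sum_act_prod (fun e b => if b then p else 1 - p)) /=.
by rewrite big1 // => e _; rewrite addrC subrK.
Qed.

Lemma prob_none_active (K : {set 'I_L}) :
  \sum_(a : act L) act_weight a * ([forall e in K, ~~ a e])%:R = (1 - p) ^+ #|K|.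
Proof.
pose G e (b : bool) := if b then (if e \in K then 0 else p) else 1 - p.
have factor a : act_weight a * ([forall e in K, ~~ a e])%:R = \prod_(e < L) G e (a e).
  case: (boolP [forall e in K, ~~ a e]) => [/forall_inP noK | /forall_inPn [e eK]].
    rewrite mulr1; apply: eq_bigr => e _; rewrite /G.
    by case: (boolP (a e)) => // ae; case: (boolP (e \in K)) => // /noK; rewrite ae.
  by rewrite negbK mulr0 (bigD1 e) //= /G => ->; rewrite eK mul0r.
rewrite (eq_bigr _ (fun a _ => factor a)) sum_act_prod /G -prodr_const.
rewrite (bigID (mem K)) /= [X in _ * X]big1 => [|e /negbTE ->]; last first.
  by rewrite addrC subrK.
by rewrite mulr1; apply: eq_bigr => e ->; rewrite add0r.
Qed.

Lemma expect_some_active (K : {set 'I_L}) (x y : R) :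
  \sum_(a : act L) act_weight a * (if [exists e in K, a e] then x else y) =
    y - (1 - (1 - p) ^+ #|K|) * (y - x).
Proof.
have pointwise a : act_weight a * (if [exists e in K, a e] then x else y) =
    act_weight a * y -
    (act_weight a - act_weight a * ([forall e in K, ~~ a e])%:R) * (y - x).
  rewrite -(negbK [exists e in K, a e]) negb_exists_in.
  by case: [forall _ in _, _]; rewrite /=; ring.
rewrite (eq_bigr _ (fun a _ => pointwise a)) sumrB -mulr_suml -mulr_suml sumrB.
by rewrite prob_none_active sum_act_weight mul1r.
Qed.

End Expectation.

Section Value.
Variables (R : realFieldType) (L : nat) (p : R).
Hypotheses (p_ge0 : 0 <= p) (p_le1 : p <= 1).

Lemma act_weight_ge0 (a : act L) : 0 <= act_weight p a.
Proof. by apply: prodr_ge0 => e _; case: (a e); rewrite ?subr_ge0. Qed.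

Lemma expn_miss_mono (k n : nat) : (k <= n)%N -> (1 - p) ^+ n <= (1 - p) ^+ k.
Proof.
move=> le_kn; rewrite -(subnK le_kn) exprD ler_piMl ?exprn_ge0 ?subr_ge0 //.
by rewrite exprn_ile1 ?subr_ge0 ?lerBlDr ?lerDl.
Qed.

(* Number of untraversed edges an optimal searcher can face when [u] edges
   are untraversed: both edges at O before the first move, one afterwards. *)
Definition frontier_size (u : nat) : nat := if u == L then 2 else 1.

Definition hit_prob (u : nat) : R := 1 - (1 - p) ^+ frontier_size u.

(* [value t u]: expected number of untraversed edges after [t] more stages
   when [u] are untraversed and the searcher takes a frontier edge as soon
   as one is active. *)
Fixpoint value (t u : nat) : R :=
  if t is t'.+1 then value t' u - hit_prob u * (value t' u - value t' u.-1)
  else u%:R.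

Lemma hit_prob_ge0 u : 0 <= hit_prob u.
Proof. by rewrite subr_ge0 -(expr0 (1 - p)) expn_miss_mono. Qed.

Lemma hit_prob_le1 u : hit_prob u <= 1.
Proof. by rewrite lerBlDr lerDl exprn_ge0 ?subr_ge0. Qed.

Lemma value_mono t u : value t u.-1 <= value t u.
Proof.
elim: t u => [|t IH] u /=; first by rewrite ler_nat leq_pred.
have := IH u; have := IH u.-1.
have := hit_prob_ge0 u; have := hit_prob_le1 u.
have := hit_prob_ge0 u.-1; have := hit_prob_le1 u.-1.
set x := value t u.-1.-1; set y := value t u.-1; set z := value t u.
by move=> *; nra.
Qed.

(* A searcher whose next stage discovers a new edge with probability at most
   [hit_prob u] (the event "some edge of a set of size [k <= frontier_size u]
   is active") does no better than [value]. *)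
Lemma value_step_le t u k : (k <= frontier_size u)%N ->
  value t.+1 u <= value t u - (1 - (1 - p) ^+ k) * (value t u - value t u.-1).
Proof.
move=> le_k; rewrite /= lerD2l lerN2 ler_wpM2r ?subr_ge0 ?value_mono //.
by rewrite lerD2l lerN2 expn_miss_mono.
Qed.

End Value.

Section Simulation.
Variable L : nat.
Implicit Types (tr : seq 'I_L) (v : nat) (a : act L).

Definition unexplored tr : nat := #|[pred e : 'I_L | e \notin tr]|.

Lemma unexplored_nil : unexplored [::] = L.
Proof. by rewrite -[RHS]card_ord; apply: eq_card => x; rewrite !inE. Qed.

Lemma unexplored_rcons tr e :
  unexplored (rcons tr e) = if e \in tr then unexplored tr else (unexplored tr).-1.
Proof.
rewrite /unexplored; case: (boolP (e \in tr)) => tr_e.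
  by apply: eq_card => x; rewrite !inE mem_rcons in_cons; case: eqP => // ->; rewrite tr_e.
rewrite (cardD1 e [pred x | x \notin tr]) inE tr_e /=.
by apply: eq_card => x; rewrite !inE mem_rcons in_cons negb_or.
Qed.

Lemma unexplored_lt tr e : e \in tr -> (unexplored tr < L)%N.
Proof.
move=> tr_e; rewrite -[L]card_ord; apply: proper_card; apply/properP.
by split; [apply/subsetP | exists e; rewrite ?inE ?tr_e].
Qed.

Definition next_state v tr (r : option ('I_L * nat)) : nat * seq 'I_L :=
  if r is Some (e, v') then (v', rcons tr e) else (v, tr).

Definition step (s : strategy L) (h : seq (act L)) v tr a : nat * seq 'I_L :=
  next_state v tr (mv v a (s (rcons h a))).

Lemma simst_cons s h v tr a l :
  simst s h v tr (a :: l) = simst s (rcons h a) (step s h v tr a).1 (step s h v tr a).2 l.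
Proof. by rewrite /= /step; case: mv => [[e v']|]. Qed.

Lemma simst_rcons s h v tr l a :
  simst s h v tr (rcons l a) =
  step s (h ++ l) (simst s h v tr l).1 (simst s h v tr l).2 a.
Proof.
elim: l h v tr => [|b l IH] h v tr; first by rewrite /= cats0 /step; case: mv => [[]|].
by rewrite rcons_cons simst_cons IH simst_cons -cats1 -catA.
Qed.

Lemma state_rcons s w a :
  state s (rcons w a) = step s w (state s w).1 (state s w).2 a.
Proof. exact: simst_rcons. Qed.

Lemma mv_some v a m e v' : mv v a m = Some (e, v') ->
  a e /\ ((v = e /\ v' = e.+1 %% L) \/ (v = e.+1 %% L /\ v' = e))%N.
Proof.
case: m => [f|] //=.
case: ifP => [/andP[af /eqP->] [<- <-]|_]; first by split => //; left.
by case: ifP => [/andP[af /eqP->] [<- <-]|_] //; split => //; right.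
Qed.

Lemma succ_mod (e : 'I_L) :
  (e.+1 %% L = e.+1 /\ e.+1 < L \/ e.+1 = L /\ e.+1 %% L = 0)%N.
Proof.
case: (ltnP e.+1 L) => lt_eL; first by left; rewrite modn_small.
have eL : e.+1 = L by have := ltn_ord e; lia.
by right; rewrite eL modnn.
Qed.

Definition incident v (x : 'I_L) : bool := (v == x) || (v == x.+1 %% L)%N.

Definition frontier v tr : {set 'I_L} := [set x | (x \notin tr) && incident v x].

Lemma step_unexplored s h v tr a :
  unexplored (step s h v tr a).2 = unexplored tr \/
  (unexplored (step s h v tr a).2 = (unexplored tr).-1 /\
   [exists e in frontier v tr, a e]).
Proof.
rewrite /step; case Emv: mv => [[e v']|] /=; last by left.
have [ae move_e] := mv_some Emv; rewrite unexplored_rcons.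
case: (boolP (e \in tr)) => tr_e; [left | right] => //; split => //.
apply/existsP; exists e; rewrite ae andbT inE tr_e /incident.
by case: move_e => -[-> _]; rewrite eqxx ?orbT.
Qed.

End Simulation.

Section Arc.
Variable L : nat.
Hypothesis L_gt0 : (0 < L)%N.
Implicit Types (tr : seq 'I_L) (v : nat) (a : act L).

Definition arc_state v tr : Prop :=
  (v < L)%N /\ exists A B : nat, (A + B <= L)%N /\
  (forall e : 'I_L, (e \in tr) = (e < A) || (L - B <= e))%N /\
  ((v <= A) || (L - B <= v))%N.

Lemma arc_state_nil : arc_state 0 (@nil 'I_L).
Proof.
split=> //; exists 0%N, 0%N; split=> //; split=> // e.
by rewrite in_nil; have := ltn_ord e; lia.
Qed.

Lemma card_frontier_nil v : arc_state v [::] -> (#|frontier v (@nil 'I_L)| <= 2)%N.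
Proof.
move=> [lt_vL [A [B [_ [trE onv]]]]].
have lt_LL : (L.-1 < L)%N by lia.
have A0 : A = 0%N.
  by case: (posnP A) => // A_gt0; have := trE (Ordinal L_gt0); rewrite in_nil /= A_gt0.
have B0 : B = 0%N.
  case: (posnP B) => // B_gt0; have := trE (Ordinal lt_LL); rewrite in_nil /=.
  have -> : (L - B <= L.-1)%N by lia.
  by rewrite orbT.
have v0 : v = 0%N by lia.
suff sub : frontier v (@nil 'I_L) \subset [set Ordinal L_gt0; Ordinal lt_LL].
  by apply: leq_trans (subset_leq_card sub) _; rewrite cards2; case: (_ != _).
apply/subsetP => x; rewrite !inE /incident v0 => /andP[_ x_at0].
move: (succ_mod x) x_at0; move: (x.+1 %% L)%N => sx sxE x_at0.
by apply/orP; rewrite -!val_eqE /=; lia.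
Qed.

(* Once an edge is traversed, at most one untraversed edge is incident to
   the searcher: the arc has a single boundary vertex on each side. *)
Lemma card_frontier_cons v tr : arc_state v tr -> tr != [::] ->
  (#|frontier v tr| <= 1)%N.
Proof.
move=> [lt_vL [A [B [_ [trE onv]]]]] tr_nonnil.
have [e0 e0_in] : exists e0, e0 \in tr.
  by case: tr tr_nonnil {trE} => [|e0 tr'] // _; exists e0; rewrite mem_head.
rewrite trE in e0_in.
case: (set_0Vmem (frontier v tr)) => [->|[x x_fr]]; first by rewrite cards0.
apply: leq_trans (subset_leq_card (_ : _ \subset [set x])) _; last by rewrite cards1.
apply/subsetP => y y_fr; rewrite inE; apply/eqP/val_inj.
move: x_fr y_fr; rewrite !inE /incident !trE => /andP[x_out x_at] /andP[y_out y_at].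
have := ltn_ord e0; have := ltn_ord x; have := ltn_ord y.
move: (succ_mod x) x_at; move: (x.+1 %% L)%N => sx sxE x_at.
move: (succ_mod y) y_at; move: (y.+1 %% L)%N => sy syE y_at.
by move=> *; change (nat_of_ord y = nat_of_ord x); lia.
Qed.

Lemma card_frontier v tr :
  arc_state v tr -> (#|frontier v tr| <= frontier_size L (unexplored tr))%N.
Proof.
move=> arc; rewrite /frontier_size; case: tr arc => [|e0 tr'] arc.
  by rewrite unexplored_nil eqxx card_frontier_nil.
by rewrite (ltn_eqF (unexplored_lt (mem_head e0 tr'))) card_frontier_cons.
Qed.

Lemma arc_state_mv v tr a m e v' :
  arc_state v tr -> mv v a m = Some (e, v') -> arc_state v' (rcons tr e).
Proof.
move=> [lt_vL [A [B [le_ABL [trE onv]]]]] /mv_some [_ move_e].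
have lt_v'L : (v' < L)%N by case: move_e => -[_ ->]; [exact: ltn_pmod | exact: ltn_ord].
split=> //; have := ltn_ord e.
move: (succ_mod e) move_e; move: (e.+1 %% L)%N => se seE move_e lt_eL.
have trE' A' B' : (forall x : 'I_L,
    [|| x == e, x < A | L - B <= x]%N = ((x < A') || (L - B' <= x))%N) ->
    forall x : 'I_L, (x \in rcons tr e) = ((x < A') || (L - B' <= x))%N.
  by move=> E x; rewrite mem_rcons in_cons trE E.
case: (boolP (e \in tr)) => tr_e; rewrite trE in tr_e.
  exists A, B; split=> //; split; last by lia.
  by apply: trE' => x; case: eqP => // ->; rewrite tr_e.
case: (eqVneq (nat_of_ord e) A) => eA.
  exists A.+1, B; split; first by lia.
  by split; [apply: trE' => x; rewrite -val_eqE /=; apply/idP/idP; lia | lia].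
exists A, B.+1; split; first by lia.
by split; [apply: trE' => x; rewrite -val_eqE /=; apply/idP/idP; lia | lia].
Qed.

Lemma arc_state_step s h v tr a : arc_state v tr ->
  arc_state (step s h v tr a).1 (step s h v tr a).2.
Proof. by rewrite /step; case Emv: mv => [[e v']|] //= arc; apply: arc_state_mv Emv. Qed.

End Arc.

Section AnyStrategy.
Variables (R : realFieldType) (L : nat) (p : R) (s : strategy L).
Hypotheses (L_gt0 : (0 < L)%N) (p_ge0 : 0 <= p) (p_le1 : p <= 1).

Lemma value_le_expect t h v tr : arc_state v tr ->
  value L p t (unexplored tr) <=
  expect p t (fun l => (unexplored (simst s h v tr l).2)%:R).
Proof.
elim: t h v tr => [|t IH] h v tr arc //=.
set U := unexplored tr; set K := frontier v tr.
apply: le_trans (value_step_le p_ge0 p_le1 t (card_frontier L_gt0 arc)) _.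
rewrite -expect_some_active; apply: ler_sum => a _.
apply: ler_wpM2l; first exact: act_weight_ge0.
have found_le : (if [exists e in K, a e] then value L p t U.-1 else value L p t U)
    <= value L p t (unexplored (step s h v tr a).2).
  case: (step_unexplored s h v tr a) => [-> | [-> ->]] //.
  by case: ifP => _; rewrite ?value_mono.
apply: le_trans found_le _.
have := IH (rcons h a) _ _ (arc_state_step L_gt0 s h a arc).
by rewrite /step; case: mv => [[e v']|].
Qed.

End AnyStrategy.

Section EulerianTour.
Variable L : nat.
Hypothesis L_ge2 : (2 <= L)%N.
Implicit Types (tr : seq 'I_L) (v : nat) (a : act L).

Lemma active_ord a (x : 'I_L) : active a x = a x.
Proof.
apply/existsP/idP => [[y /andP[/eqP yx ay]]|ax]; last by exists x; rewrite eqxx.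
by rewrite (_ : x = y) //; apply: val_inj.
Qed.

Lemma exists_set1 a (x : 'I_L) : [exists y in [set x], a y] = a x.
Proof. by apply/existsP/idP => [[y /andP[/set1P -> //]] | ax]; exists x; rewrite inE eqxx. Qed.

Definition sweep_up k v tr : Prop :=
  exists2 e1 : 'I_L, (exists rest, tr = e1 :: rest) &
    [/\ nat_of_ord e1 = 0%N, v = k & forall x : 'I_L, (x \in tr) = (x < k)%N].

Definition sweep_down k v tr : Prop :=
  exists2 e1 : 'I_L, (exists rest, tr = e1 :: rest) &
    [/\ nat_of_ord e1 = L.-1, v = (L - k)%N & forall x : 'I_L, (x \in tr) = (L - k <= x)%N].

Definition eul_state v tr : Prop :=
  unexplored tr = 0%N \/ (tr = [::] /\ v = 0%N) \/
  exists k, [/\ (0 < k < L)%N, size tr = k, unexplored tr = (L - k)%N &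
                sweep_up k v tr \/ sweep_down k v tr].

Definition eul_progress v tr (K : {set 'I_L}) : Prop :=
  forall a m, eul_ok v tr a (mv v a m) ->
    eul_state (next_state v tr (mv v a m)).1 (next_state v tr (mv v a m)).2 /\
    unexplored (next_state v tr (mv v a m)).2 =
      if [exists x in K, a x] then (unexplored tr).-1 else unexplored tr.

Lemma eul_progress_done v tr (x : 'I_L) :
  unexplored tr = 0%N -> eul_progress v tr [set x].
Proof.
move=> U0 a m _; case: mv => [[e v']|] /=; last by rewrite U0; split; [left | case: ifP].
have U0' : unexplored (rcons tr e) = 0%N by rewrite unexplored_rcons U0; case: ifP.
by rewrite U0' U0; split; [left | case: ifP].
Qed.

Lemma first_move a m e v' : mv 0%N a m = Some (e, v') ->
  a e /\ (nat_of_ord e = 0%N /\ v' = 1%N \/ nat_of_ord e = L.-1 /\ v' = L.-1).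
Proof.
move=> /mv_some [ae move_e]; split=> //.
move: (succ_mod e) move_e; move: (e.+1 %% L)%N => se seE move_e.
have := ltn_ord e; lia.
Qed.

Lemma eul_progress_start (e0 eL : 'I_L) :
  nat_of_ord e0 = 0%N -> nat_of_ord eL = L.-1 ->
  eul_progress 0%N [::] [set e0; eL].
Proof.
move=> e0E eLE a m; rewrite /eul_ok.
have U1 (e : 'I_L) : unexplored [:: e] = L.-1 by rewrite (unexplored_rcons [::] e) unexplored_nil.
case Emv: (mv 0%N a m) => [[e v']|] /=; last first.
  move=> /andP[no0 noL].
  have -> : [exists x in [set e0; eL], a x] = false.
    apply/existsP => -[x /andP[]]; rewrite !inE => /orP[] /eqP -> ax.
      by move: no0; rewrite -e0E active_ord ax.
    by move: noL; rewrite -eLE active_ord ax.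
  by rewrite unexplored_nil; split=> //; right; left.
move=> _; have [ae e_first] := first_move Emv.
have -> : [exists x in [set e0; eL], a x].
  apply/existsP; exists e; rewrite !inE ae -!val_eqE /= e0E eLE andbT.
  by case: e_first => -[-> _]; rewrite eqxx ?orbT.
rewrite U1 unexplored_nil; split=> //; right; right; exists 1%N.
split; [lia | by [] | by rewrite U1; lia |].
case: e_first => -[eE v'E]; [left | right]; exists e; do ?by exists [::].
  by split=> // x; rewrite inE -val_eqE /= eE; apply/eqP/idP; lia.
split=> //; first by lia.
by move=> x; rewrite inE -val_eqE /= eE; apply/eqP/idP; have := ltn_ord x; lia.
Qed.

Lemma sweep_move v e1 rest a m (n : 'I_L) :
  (size (e1 :: rest) < L)%N ->
  (if nat_of_ord e1 == 0%N then v else ((v + L.-1) %% L)%N) = n ->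
  eul_ok v (e1 :: rest) a (mv v a m) ->
  if mv v a m is Some (e, _) then e = n /\ a n else ~~ a n.
Proof.
rewrite /eul_ok => -> nE; rewrite nE.
case Emv: mv => [[e v']|]; last by rewrite active_ord.
move=> /eqP en; have [ae _] := mv_some Emv.
have en' : e = n by apply: val_inj.
by rewrite -en'.
Qed.

Lemma sweep_unexplored v e1 rest a m (n : 'I_L) :
  (size (e1 :: rest) < L)%N ->
  (if nat_of_ord e1 == 0%N then v else ((v + L.-1) %% L)%N) = n ->
  n \notin e1 :: rest -> eul_ok v (e1 :: rest) a (mv v a m) ->
  unexplored (next_state v (e1 :: rest) (mv v a m)).2 =
    if [exists x in [set n], a x] then (unexplored (e1 :: rest)).-1
    else unexplored (e1 :: rest).
Proof.
move=> size_lt nE n_new /(sweep_move size_lt nE); rewrite exists_set1.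
case: mv => [[e v'] [-> ->]|/negbTE ->] //.
by rewrite /= -rcons_cons unexplored_rcons (negbTE n_new).
Qed.

Lemma eul_progress_up k v tr (lt_kL : (k < L)%N) :
  (0 < k)%N -> size tr = k -> unexplored tr = (L - k)%N -> sweep_up k v tr ->
  eul_progress v tr [set Ordinal lt_kL].
Proof.
move=> k_gt0 size_tr Utr [e1 [rest tr_def] [e1E vE trE]] a m ok; subst tr.
have nE : (if nat_of_ord e1 == 0%N then v else ((v + L.-1) %% L)%N) = Ordinal lt_kL.
  by rewrite e1E.
have n_new : Ordinal lt_kL \notin e1 :: rest by rewrite trE ltnn.
have size_lt : (size (e1 :: rest) < L)%N by rewrite size_tr.
split; last exact: sweep_unexplored.
have := sweep_move size_lt nE ok; case Emv: (mv v a m) => [[e v']|] /=; last first.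
  by move=> _; right; right; exists k; split=> //; [lia | left; exists e1; first by exists rest].
move=> [en _]; subst e; have [_ [[_ ->] | [ve _]]] := mv_some Emv; last first.
  by move: (succ_mod (Ordinal lt_kL)) ve => /=; rewrite vE; move: (k.+1 %% L)%N; lia.
have Unext : unexplored (e1 :: rcons rest (Ordinal lt_kL)) = (L - k.+1)%N.
  by rewrite -rcons_cons unexplored_rcons (negbTE n_new) Utr; lia.
case: (ltnP k.+1 L) => [lt_k1L | ]; last by left; rewrite Unext; lia.
right; right; exists k.+1; split; [lia | by rewrite /= size_rcons -size_tr | by [] |].
left; exists e1; first by exists (rcons rest (Ordinal lt_kL)).
split=> //; first by rewrite modn_small.
by move=> x; rewrite -rcons_cons mem_rcons in_cons trE -val_eqE /=; apply/idP/idP; lia.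
Qed.

Lemma eul_progress_down k v tr (lt_kL : (L - k.+1 < L)%N) :
  (0 < k < L)%N -> size tr = k -> unexplored tr = (L - k)%N -> sweep_down k v tr ->
  eul_progress v tr [set Ordinal lt_kL].
Proof.
move=> k_bd size_tr Utr [e1 [rest tr_def] [e1E vE trE]] a m ok; subst tr.
have nE : (if nat_of_ord e1 == 0%N then v else ((v + L.-1) %% L)%N) = Ordinal lt_kL.
  rewrite e1E vE (_ : (L.-1 == 0%N) = false) /=; last by lia.
  by rewrite (_ : (L - k + L.-1 = L - k.+1 + L)%N) ?modnDr ?modn_small //; lia.
have n_new : Ordinal lt_kL \notin e1 :: rest by rewrite trE /=; lia.
have size_lt : (size (e1 :: rest) < L)%N by rewrite size_tr; lia.
split; last exact: sweep_unexplored.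
have := sweep_move size_lt nE ok; case Emv: (mv v a m) => [[e v']|] /=; last first.
  by move=> _; right; right; exists k; split=> //; right; exists e1; first by exists rest.
move=> [en _]; subst e; have [_ [[ve _] | [_ ->]]] := mv_some Emv.
  by move: ve; rewrite vE /=; lia.
have Unext : unexplored (e1 :: rcons rest (Ordinal lt_kL)) = (L - k.+1)%N.
  by rewrite -rcons_cons unexplored_rcons (negbTE n_new) Utr; lia.
case: (ltnP k.+1 L) => [lt_k1L | ]; last by left; rewrite Unext; lia.
right; right; exists k.+1; split; [lia | by rewrite /= size_rcons -size_tr | by [] |].
right; exists e1; first by exists (rcons rest (Ordinal lt_kL)).
split=> //.
by move=> x; rewrite -rcons_cons mem_rcons in_cons trE -val_eqE /=; apply/idP/idP; lia.
Qed.

Lemma eul_step v tr : eul_state v tr -> exists2 K : {set 'I_L},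
  #|K| = frontier_size L (unexplored tr) & eul_progress v tr K.
Proof.
have L_gt0 : (0 < L)%N by lia.
have lt_LL : (L.-1 < L)%N by lia.
rewrite /frontier_size; case=> [U0 | [[-> ->] | [k [k_bd size_tr Utr [up | down]]]]].
- exists [set Ordinal L_gt0]; last exact: eul_progress_done.
  by rewrite cards1 U0 (_ : (0 == L)%N = false) //; lia.
- exists [set Ordinal L_gt0; Ordinal lt_LL]; last exact: eul_progress_start.
  by rewrite cards2 unexplored_nil eqxx -val_eqE /= (_ : (0 == L.-1)%N = false) //; lia.
- have lt_kL : (k < L)%N by lia.
  exists [set Ordinal lt_kL]; last by apply: eul_progress_up => //; lia.
  by rewrite cards1 Utr (_ : (L - k == L)%N = false) //; lia.
- have lt_kL : (L - k.+1 < L)%N by lia.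
  exists [set Ordinal lt_kL]; last exact: eul_progress_down.
  by rewrite cards1 Utr (_ : (L - k == L)%N = false) //; lia.
Qed.

Lemma eul_state_reachable (sE : strategy L) :
  Eulerian sE -> forall w, eul_state (state sE w).1 (state sE w).2.
Proof.
move=> eulerian; elim/last_ind => [|w a IH]; first by right; left.
have [K _ progress] := eul_step IH.
by rewrite state_rcons; apply: (progress a _ (eulerian w a)).1.
Qed.

End EulerianTour.

Section EulerianValue.
Variables (R : realFieldType) (L : nat) (p : R) (sE : strategy L).
Hypotheses (L_ge2 : (2 <= L)%N) (eulerian : Eulerian sE).

Lemma expect_eulerian t w :
  expect p t (fun l => (unexplored (state sE (w ++ l)).2)%:R) =
  value L p t (unexplored (state sE w).2).
Proof.
elim: t w => [|t IH] w /=; first by rewrite cats0.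
under eq_bigr => a _ do under eq_expect => l do rewrite -cat_rcons.
under eq_bigr => a _ do rewrite IH state_rcons.
have [K sizeK progress] := eul_step L_ge2 (eul_state_reachable L_ge2 eulerian w).
rewrite /hit_prob -sizeK -expect_some_active; apply: eq_bigr => a _.
by rewrite /step (progress a _ (eulerian w a)).2; case: ifP.
Qed.

End EulerianValue.

Lemma unif_term_expect (R : realFieldType) (L : nat) (p : R) (s : strategy L) t :
  unif_term p s t = L%:R^-1 * expect p t (fun l => (unexplored (state s l).2)%:R).
Proof.
rewrite /unif_term /prob_not_found exchange_big /= -sum_weight_hist; congr (_ * _).
apply: eq_bigr => w _; rewrite mulr_natr -sumr_const [RHS]big_mkcond /=.
by apply: eq_bigr => e _; rewrite inE; case: (e \in _).
Qed.

Theorem mainTheorem16 (R : archiRealFieldType) (L : nat) (p : R) :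
  (2 <= L)%N -> 0 < p <= 1 ->
  forall sE : strategy L, Eulerian sE ->
  forall s : strategy L, payoff_le p sE s.
Proof.
move=> L_ge2 /andP[p_gt0 p_le1] sE eulerian s N; exists N.
apply: ler_sum => t _; rewrite !unif_term_expect.
apply: ler_wpM2l; first by rewrite invr_ge0 ler0n.
have L_gt0 : (0 < L)%N by apply: ltnW.
have := expect_eulerian p L_ge2 eulerian t [::]; rewrite /= => ->.
have := value_le_expect s L_gt0 (ltW p_gt0) p_le1 t [::] (arc_state_nil L_gt0).
by rewrite unexplored_nil.
Qed.
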